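(* For each $k\in\{2,3,4,5,6\}$, the pagenumber of the complete bipartite graph $K_{k+1,\lfloor (k+1)^2/4\rfloor+1}$ is $k+1$.
   Context: A book with $k$ pages consists of a line (the spine) and $k$ half-planes (the pages) whose common boundary is the spine. A $k$-page drawing of a graph places all vertices on the spine and draws each edge inside a single page; a $k$-page embedding is a $k$-page drawing with no edge crossings. The pagenumber of a graph $G$ is the minimum $k$ such that $G$ admits a $k$-page embedding. *)

From mathcomp Require Import all_boot.
Set Implicit Arguments. Unset Strict Implicit. Unset Printing Implicit Defensive.

(* A graph is a finite vertex type V with an adjacency relation E
   (assumed symmetric and irreflexive for the graphs we consider). *)

(* Combinatorial book embedding: the spine order is given by an injective
   position map pos : V -> nat; each edge {u,v} gets a page in 'I_k
   (the assignment is symmetric in u v); two edges on the same page must not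
   cross, i.e. their endpoints must not interleave along the spine. *)
Definition book_embedding (V : finType) (E : rel V) (k : nat)
    (pos : V -> nat) (page : V -> V -> 'I_k) : Prop :=
  injective pos /\
  (forall u v, E u v -> page u v = page v u) /\
  (forall u v x y, E u v -> E x y -> page u v = page x y ->
     ~ (pos u < pos x /\ pos x < pos v /\ pos v < pos y)).

Definition has_k_page_embedding (V : finType) (E : rel V) (k : nat) : Prop :=
  exists (pos : V -> nat) (page : V -> V -> 'I_k), book_embedding E pos page.

Definition is_pagenumber (V : finType) (E : rel V) (p : nat) : Prop :=
  has_k_page_embedding E p /\
  (forall q, has_k_page_embedding E q -> p <= q).

Definition Kbip_rel (m n : nat) : rel ('I_m + 'I_n) :=
  fun u v =>
    match u, v with
    | inl _, inr _ => true
    | inr _, inl _ => true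
    | _, _ => false
    end.

From mathcomp Require Import all_boot zify.
Set Implicit Arguments. Unset Strict Implicit. Unset Printing Implicit Defensive.

(* Putting the k+1 vertices of the small side first on the spine, each with its
   own page, gives a (k+1)-page embedding.  Conversely, a book embedding of
   K_{m,n} is determined, up to relabelling, by the word over {A, B} listing the
   sides of the vertices in spine order, together with a page assignment to the
   pairs of positions carrying different letters in which interleaving pairs get
   different pages, i.e. a proper colouring of the crossing graph of the word.
   Rotations and reflections of the spine preserve interleaving, so only words
   that are lexicographically least in their dihedral orbit matter, and for each
   of them an exhaustive search shows that the crossing graph is not
   k-colourable. *)

(* Spine positions are 0, ..., N-1: [w p] is the side of the vertex at position
   [p] and [col p q] the page of the edge between positions [p] and [q]. *)
Definition word_embedding N k (w : nat -> bool) (col : nat -> nat -> nat) : Prop :=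
  [/\ (forall p q, p < N -> q < N -> w p != w q -> col p q < k),
      (forall p q, p < N -> q < N -> w p != w q -> col p q = col q p) &
      (forall p x v y, y < N -> w p != w v -> w x != w y -> p < x -> x < v -> v < y ->
         col p v != col x y)].

Definition chords_cross a c b d :=
  (minn a c < minn b d < maxn a c) && (maxn a c < maxn b d) ||
  (minn b d < minn a c < maxn b d) && (maxn b d < maxn a c).

Lemma word_embedding_widen N k k' w col :
  k <= k' -> word_embedding N k w col -> word_embedding N k' w col.
Proof.
move=> le_kk' [page_lt page_sym no_cross]; split=> // p q *.
by apply: leq_trans le_kk'; apply: page_lt.
Qed.

Lemma eq_word_embedding N k w w' col : {in gtn N, w =1 w'} ->
  word_embedding N k w col -> word_embedding N k w' col.
Proof.
move=> ww' [page_lt page_sym no_cross].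
split=> [p q Hp Hq|p q Hp Hq|p x v y Hy Hpv Hxy Hpx Hxv Hvy].
- by rewrite -!ww' //; apply: page_lt.
- by rewrite -!ww' //; apply: page_sym.
- by rewrite -!ww' ?inE in Hpv Hxy; [apply: no_cross | lia..].
Qed.

Lemma word_embedding_cross N k w col a c b d : word_embedding N k w col ->
  a < N -> c < N -> b < N -> d < N -> w a != w c -> w b != w d ->
  chords_cross a c b d -> col a c != col b d.
Proof.
move=> [_ page_sym no_cross] Ha Hc Hb Hd Hac Hbd.
have sorted p q : p < N -> q < N -> w p != w q ->
    col p q = col (minn p q) (maxn p q) /\ w (minn p q) != w (maxn p q).
  by move=> Hp Hq Hpq; case: leqP => // _; rewrite page_sym // eq_sym.
have [-> Hac'] := sorted a c Ha Hc Hac; have [-> Hbd'] := sorted b d Hb Hd Hbd.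
by case/orP=> /andP[/andP[? ?] ?]; [|rewrite eq_sym]; apply: no_cross => //; lia.
Qed.

Lemma word_embedding_relabel N k w col (sg : nat -> nat) :
  word_embedding N k w col -> (forall i, i < N -> sg i < N) ->
  (forall p x v y, p < x -> x < v -> v < y -> y < N ->
     chords_cross (sg p) (sg v) (sg x) (sg y)) ->
  word_embedding N k (w \o sg) (fun p q => col (sg p) (sg q)).
Proof.
move=> emb sgN sg_cross; have [page_lt page_sym _] := emb.
split=> [p q Hp Hq|p q Hp Hq|p x v y Hy Hpv Hxy Hpx Hxv Hvy].
- by apply: page_lt; apply: sgN.
- by apply: page_sym; apply: sgN.
- by apply: (word_embedding_cross emb); rewrite ?sgN //; [lia..|apply: sg_cross].
Qed.

Lemma nth_rot (s : seq bool) j i : j < size s -> i < size s ->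
  nth false (rot j s) i =
  nth false s (if i + j < size s then i + j else i + j - size s).
Proof.
move=> Hj Hi; rewrite /rot nth_cat size_drop.
case: ifP => H1; case: ifP => H2; try lia.
  by rewrite nth_drop addnC.
by rewrite nth_take; [congr nth|]; lia.
Qed.

Lemma word_embedding_rot N k s col j : size s = N -> j < N ->
  word_embedding N k (nth false s) col ->
  exists col', word_embedding N k (nth false (rot j s)) col'.
Proof.
move=> Hs Hj emb; pose sg i := if i + j < N then i + j else i + j - N.
exists (fun p q => col (sg p) (sg q)).
apply: (@eq_word_embedding _ _ (nth false s \o sg)).
  by move=> i; rewrite inE => Hi; rewrite /= nth_rot Hs.
apply: word_embedding_relabel => // [i Hi|p x v y *]; rewrite /sg.
  by case: ifP; lia.
by do 4!case: ifP => ?; rewrite /chords_cross; lia.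
Qed.

Lemma word_embedding_rev N k s col : size s = N ->
  word_embedding N k (nth false s) col ->
  exists col', word_embedding N k (nth false (rev s)) col'.
Proof.
move=> Hs emb; pose sg i := N - i.+1.
exists (fun p q => col (sg p) (sg q)).
apply: (@eq_word_embedding _ _ (nth false s \o sg)).
  by move=> i; rewrite inE => Hi; rewrite /= nth_rev Hs.
by apply: word_embedding_relabel => // *; rewrite /sg /chords_cross; lia.
Qed.

Lemma spine_ranking (V : finType) (v0 : V) (pos : V -> nat) : injective pos ->
  exists rk : V -> nat, exists vtx : nat -> V,
  [/\ forall v, rk v < #|V|, cancel rk vtx, {in gtn #|V|, cancel vtx rk} &
      forall u v, (pos u < pos v) = (rk u < rk v)].
Proof.
move=> pos_inj; pose rk v := #|[pred u | pos u < pos v]|.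
have rk_mono u v : (pos u < pos v) = (rk u < rk v).
  case: ltnP => [lt_uv|le_vu]; apply/esym.
    apply: proper_card; apply/properP; split.
      by apply/subsetP => x; rewrite !inE => /ltn_trans; apply.
    by exists u; rewrite !inE ?ltnn.
  apply/negbTE; rewrite -leqNgt; apply: subset_leq_card.
  by apply/subsetP => x; rewrite !inE => /leq_trans; apply.
have rk_lt v : rk v < #|V|.
  by apply: proper_card; apply/properP; split; [apply/subsetP | exists v; rewrite !inE ?ltnn].
have rk_inj : injective rk.
  by move=> u v E; apply: pos_inj; case: (ltngtP (pos u) (pos v)); rewrite // rk_mono E ltnn.
pose vtx i := odflt v0 [pick v | rk v == i].
have rkK : cancel rk vtx.
  by move=> v; rewrite /vtx; case: pickP => [u /eqP/rk_inj //|/(_ v)]; rewrite eqxx.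
exists rk, vtx; split=> // i; rewrite inE => lt_i.
have rk_ord_inj : injective (fun v => Ordinal (rk_lt v)) by move=> u v [/rk_inj].
have /codomP[v /(congr1 val)/= ->] := inj_card_onto rk_ord_inj (eq_leq (card_ord _)) (Ordinal lt_i).
by rewrite rkK.
Qed.

Definition is_inl (m n : nat) (v : 'I_m + 'I_n) : bool := if v is inl _ then true else false.

Lemma Kbip_relE m n u v : @Kbip_rel m n u v = (is_inl u != is_inl v).
Proof. by case: u; case: v. Qed.

Lemma count_is_inl_enum m n : count (@is_inl m n) (enum {: 'I_m + 'I_n}) = m.
Proof.
rewrite enumT unlock /= /sum_enum count_cat !count_map.
rewrite (@eq_count _ _ predT) // count_predT (@eq_count _ _ pred0) // count_pred0.
by rewrite -enumT size_enum_ord addn0.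
Qed.

Definition embeddable_word N m k (s : seq bool) :=
  [/\ size s = N, count id s = m & exists col, word_embedding N k (nth false s) col].

Lemma Kbip_embeddable_word m n q pos (page : _ -> _ -> 'I_q) : 0 < m ->
  book_embedding (@Kbip_rel m n) pos page -> exists s, embeddable_word (m + n) m q s.
Proof.
move=> m_gt0 [pos_inj [page_sym no_cross]].
have [rk [vtx [rk_lt rkK vtxK rk_mono]]] := spine_ranking (inl (Ordinal m_gt0)) pos_inj.
have cardV : #|{: 'I_m + 'I_n}| = m + n by rewrite card_sum !card_ord.
rewrite cardV in rk_lt vtxK.
exists (mkseq (fun i => is_inl (vtx i)) (m + n)); split; first by rewrite size_mkseq.
  have perm_at : perm_eq (map vtx (iota 0 (m + n))) (enum {: 'I_m + 'I_n}).
    apply: uniq_perm; [|exact: enum_uniq|].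
      rewrite map_inj_in_uniq ?iota_uniq // => i j; rewrite !mem_iota => Hi Hj.
      by move/(congr1 rk); rewrite !vtxK // inE; lia.
    move=> v; rewrite mem_enum inE; apply/mapP; exists (rk v).
      by rewrite mem_iota add0n rk_lt.
    by rewrite rkK.
  by rewrite -[RHS](count_is_inl_enum m n) -(permP perm_at) count_map /mkseq count_map.
exists (fun p p' => page (vtx p) (vtx p')); split=> [p p' _ _ _|p p' Hp Hp'|p x v y Hy].
- exact: ltn_ord.
- by rewrite !nth_mkseq //= => ?; rewrite page_sym // Kbip_relE.
- move=> + + Hpx Hxv Hvy.
  have [Hp Hx Hv] : [/\ p < m + n, x < m + n & v < m + n] by split; lia.
  rewrite !nth_mkseq //= => Hpv Hxy.
  apply/negP => /eqP/val_inj/no_cross; apply; rewrite ?Kbip_relE //.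
  by rewrite !rk_mono !vtxK ?inE; lia.
Qed.

Fixpoint lexle (s t : seq bool) : bool :=
  match s, t with
  | b :: s', c :: t' => if b == c then lexle s' t' else c
  | _, _ => true
  end.

Definition dihedral_min (s : seq bool) : bool :=
  all (fun j => lexle s (rot j s) && lexle s (rot j (rev s))) (iota 0 (size s)).

Fixpoint word_code (s : seq bool) : nat :=
  if s is b :: s' then b * 2 ^ size s' + word_code s' else 0.

Lemma word_code_lt s : word_code s < 2 ^ size s.
Proof. by elim: s => [|b s IH] //=; rewrite expnS; case: b => /=; lia. Qed.

Lemma code_lt_of_lexle_false s t : size s = size t -> lexle s t = false ->
  word_code t < word_code s.
Proof.
elim: s t => [|b s IH] [|c t] //= [size_st].
case: eqP => [<- /IH|neq_bc]; first by rewrite size_st; lia.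
have := word_code_lt s; have := word_code_lt t; rewrite size_st.
by case: b c neq_bc => [] [] //= _ *; lia.
Qed.

Lemma embeddable_word_rot N m k s j : j < N ->
  embeddable_word N m k s -> embeddable_word N m k (rot j s).
Proof.
move=> lt_jN [size_s count_s [col emb]]; split; first by rewrite size_rot.
  by have /permP -> : perm_eq (rot j s) s by rewrite perm_rot.
exact: word_embedding_rot emb.
Qed.

Lemma embeddable_word_rev N m k s :
  embeddable_word N m k s -> embeddable_word N m k (rev s).
Proof.
move=> [size_s count_s [col emb]]; split; first by rewrite size_rev.
  by rewrite count_rev.
exact: word_embedding_rev emb.
Qed.

Lemma dihedral_min_descent N m k s : embeddable_word N m k s -> ~~ dihedral_min s ->
  exists2 s', embeddable_word N m k s' & word_code s' < word_code s.
Proof.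
move=> emb; have [size_s _ _] := emb.
rewrite -has_predC => /hasP[j]; rewrite mem_iota add0n size_s => /andP[_ lt_jN].
move=> /nandP[lex_rot|lex_rev].
  exists (rot j s); first exact: embeddable_word_rot.
  by apply: code_lt_of_lexle_false; [rewrite size_rot | exact: negbTE].
exists (rot j (rev s)); first exact/embeddable_word_rot/embeddable_word_rev.
by apply: code_lt_of_lexle_false; [rewrite size_rot size_rev | exact: negbTE].
Qed.

Lemma exists_dihedral_min N m k s : embeddable_word N m k s ->
  exists2 s', embeddable_word N m k s' & dihedral_min s'.
Proof.
move: {2}(word_code s) (erefl (word_code s)) => c.
elim/ltn_ind: c s => c IH s code_s emb.
have [|/(dihedral_min_descent emb)[s' emb' lt_code]] := boolP (dihedral_min s).
  by exists s.
by apply: (IH (word_code s') _ s' erefl emb'); rewrite -code_s.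
Qed.

Fixpoint words (t : nat) : nat -> seq (seq bool) :=
  match t with
  | 0 => fun f => [:: nseq f false]
  | t'.+1 => fix words_t (f : nat) : seq (seq bool) :=
      match f with
      | 0 => [:: nseq t true]
      | f'.+1 => [seq true :: w | w <- words t' f] ++ [seq false :: w | w <- words_t f']
      end
  end.

Lemma mem_words s t f : size s = t + f -> count id s = t -> s \in words t f.
Proof.
have all_false s' : count id s' = 0 -> s' = nseq (size s') false.
  move=> count0; apply/all_pred1P.
  by rewrite (@eq_all _ _ (predC id)) ?all_predC ?has_count ?count0 // => -[].
have all_true s' : count id s' = size s' -> s' = nseq (size s') true.
  by move=> count_s; apply/all_pred1P; rewrite (@eq_all _ _ id) ?all_count ?count_s // => -[].
elim: s t f => [|b s IH] [|t] [|f] //= [size_s] count_s.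
- by rewrite mem_seq1 -size_s -all_false //=; case: b count_s.
- have := count_size id s; rewrite addn0 in size_s.
  case: b count_s => /= count_s le_count; last lia.
  have -> : s = nseq t true by rewrite -size_s; apply: all_true; lia.
  by rewrite mem_seq1.
- have inj_cons (b' : bool) : injective (cons b') by move=> ? ? [].
  rewrite mem_cat; case: b count_s => /= count_s.
    by apply/orP; left; rewrite (mem_map (inj_cons _)); apply: IH; lia.
  by apply/orP; right; rewrite (mem_map (inj_cons _)); apply: (IH t.+1 f); lia.
Qed.

Inductive cell := Colored of nat | Open of seq bool.

Definition cell0 := Open [::].

Fixpoint clear_bit (c : nat) (s : seq bool) : seq bool :=
  if s is b :: s' then if c is c'.+1 then b :: clear_bit c' s' else false :: s'
  else [::].

Lemma nth_clear_bit c s i : nth false (clear_bit c s) i = nth false s i && (i != c).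
Proof. by elim: s c i => [|b s IH] [|c] [|i] //=; rewrite ?andbT ?andbF ?IH. Qed.

Fixpoint pick_open (cs : seq cell) (i : nat) (best : option (nat * seq bool * nat)) :=
  match cs with
  | [::] => best
  | Colored _ :: cs' => pick_open cs' i.+1 best
  | Open msk :: cs' =>
      let c := count id msk in
      match best with
      | Some (_, _, bc) => if c < bc then pick_open cs' i.+1 (Some (i, msk, c))
                           else pick_open cs' i.+1 best
      | None => pick_open cs' i.+1 (Some (i, msk, c))
      end
  end.

Definition drop_color (c : nat) (adjacent : bool) (a : cell) : cell :=
  if a is Open msk then if adjacent then Open (clear_bit c msk) else a else a.

Fixpoint assign (c : nat) (x : option nat) (row : seq bool) (cs : seq cell) : seq cell :=
  match cs with
  | [::] => [::]
  | a :: cs' =>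
    if x is Some 0 then Colored c :: assign c None (behead row) cs'
    else drop_color c (head false row) a ::
           assign c (if x is Some x'.+1 then Some x' else None) (behead row) cs'
  end.

(* Backtracking search for a proper k-colouring of the graph with adjacency rows
   [rows].  A cell is either coloured or open with the mask of its still
   available colours; an open cell with fewest available colours is coloured
   next, and no colour above [used], the number of colours used so far, is
   tried, which loses nothing as colours can be permuted.  The [if]
   rather than [&&] keeps vm_compute from evaluating the recursive call
   eagerly. *)
Fixpoint search (k : nat) (rows : seq (seq bool)) (fuel : nat) (cs : seq cell)
    (used : nat) : bool :=
  if fuel is fuel'.+1 then
    if pick_open cs 0 None is Some (x, msk, _) then
      has (fun c => if nth false msk c && (c <= used)
                    then search k rows fuel' (assign c (Some x) (nth [::] rows x) cs)
                           (maxn used c.+1)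
                    else false)
          (iota 0 k)
    else true
  else true.

Lemma pick_openP cs i best x msk c : pick_open cs i best = Some (x, msk, c) ->
  best = Some (x, msk, c) \/
  [/\ i <= x, x - i < size cs & nth cell0 cs (x - i) = Open msk].
Proof.
elim: cs i best => [|a cs IH] i best /=; first by left.
have shift best' : pick_open cs i.+1 best' = Some (x, msk, c) ->
    best' = Some (x, msk, c) \/
    [/\ i <= x, x - i < (size cs).+1 & nth cell0 (a :: cs) (x - i) = Open msk].
  move=> /IH[->|[le_ix lt_x nth_x]]; [by left | right].
  have -> : x - i = (x - i.+1).+1 by lia.
  by split=> //; lia.
case: a shift => [d|msk'] shift pick; first by case/shift: pick => [->|]; [left | right].
have [best' [pick' best'E]] : exists best', pick_open cs i.+1 best' = Some (x, msk, c)
    /\ (best' = best \/ best' = Some (i, msk', count id msk')).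
  by move: pick; case: best => [[[x0 m0] bc]|]; [case: ifP => _|] => pick; eexists; eauto.
case/shift: pick' => [pick'|]; last by right.
case: best'E => [<-|best'E]; first by left.
by move: pick'; rewrite best'E => -[<- <- _]; right; rewrite subnn.
Qed.

Lemma pick_open0 cs x msk c : pick_open cs 0 None = Some (x, msk, c) ->
  x < size cs /\ nth cell0 cs x = Open msk.
Proof. by case/pick_openP=> // -[_]; rewrite subn0. Qed.

Lemma size_assign c x row cs : size (assign c x row cs) = size cs.
Proof. by elim: cs x row => [|a cs IH] [[|x]|] row //=; rewrite IH. Qed.

Lemma nth_assign c x row cs y : y < size cs ->
  nth cell0 (assign c x row cs) y =
  if x == Some y then Colored c else drop_color c (nth false row y) (nth cell0 cs y).
Proof.
elim: cs x row y => [|a cs IH] x row [|y] //= lt_y.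
- by case: x => [[|x]|]; case: row.
- by case: x => [[|x]|] /=; rewrite IH // nth_behead.
Qed.

Definition adjacent (rows : seq (seq bool)) i j := nth false (nth [::] rows i) j.

Section SearchCompleteness.

Variables (k : nat) (rows : seq (seq bool)).

Definition proper_coloring E (f : nat -> nat) :=
  (forall i, i < E -> f i < k) /\
  (forall i j, i < E -> j < E -> adjacent rows i j -> f i != f j).

Definition masks_sound (cs : seq cell) :=
  forall y msk c, y < size cs -> nth cell0 cs y = Open msk -> c < k ->
  nth false msk c = false ->
  exists2 z, z < size cs & nth cell0 cs z = Colored c /\ adjacent rows z y.

Definition colors_below (cs : seq cell) used :=
  forall z c, nth cell0 cs z = Colored c -> c < used.

Definition extends_to (cs : seq cell) (f : nat -> nat) :=
  forall z c, nth cell0 cs z = Colored c -> f z = c.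

Lemma relabel_colors cs used f x :
  colors_below cs used -> extends_to cs f -> proper_coloring (size cs) f ->
  x < size cs ->
  exists2 g, extends_to cs g /\ proper_coloring (size cs) g & g x <= used.
Proof.
move=> below ext [f_lt f_prop] lt_x.
have [le_fx|lt_used] := leqP (f x) used; first by exists f.
pose sw c := if c == f x then used else if c == used then f x else c.
have sw_inj : injective sw.
  by move=> a b; rewrite /sw; case: (a =P f x); case: (a =P used); case: (b =P f x); case: (b =P used); lia.
exists (sw \o f); last by rewrite /= /sw eqxx.
split; [move=> z c col_z | split=> [i lt_i|i j lt_i lt_j adj_ij]].
- have := below _ _ col_z; rewrite /= /sw (ext _ _ col_z).
  by case: (c =P f x); case: (c =P used); lia.
- have := f_lt _ lt_i; have := f_lt _ lt_x; rewrite /= /sw.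
  by case: (f i =P f x); case: (f i =P used); lia.
- by rewrite /= (inj_eq sw_inj); apply: f_prop.
Qed.

Lemma assign_invariants cs used g x msk :
  masks_sound cs -> colors_below cs used -> extends_to cs g ->
  x < size cs -> nth cell0 cs x = Open msk ->
  let cs' := assign (g x) (Some x) (nth [::] rows x) cs in
  [/\ masks_sound cs', colors_below cs' (maxn used (g x).+1) & extends_to cs' g].
Proof.
move=> sound below ext lt_x open_x cs'.
have size_cs' : size cs' = size cs by rewrite size_assign.
have nth_cs' y : y < size cs -> nth cell0 cs' y = if Some x == Some y then Colored (g x)
    else drop_color (g x) (adjacent rows x y) (nth cell0 cs y) by move=> ?; rewrite nth_assign.
have colored_cs' z c : nth cell0 cs' z = Colored c ->
    (z = x /\ c = g x) \/ nth cell0 cs z = Colored c.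
  have [lt_z|ge_z] := ltnP z (size cs); last by rewrite nth_default ?size_cs'.
  rewrite nth_cs' //; case: eqP => [[<-] [<-]|_]; first by left.
  by case: (nth cell0 cs z) => [d|m] //=; [right | case: ifP].
split=> [y mk c|z c /colored_cs'[[_ ->]|/below]|z c /colored_cs'[[-> ->]|/ext]] //; try lia.
rewrite size_cs' => lt_y; rewrite nth_cs' //.
case: eqP => // /eqP neq_xy; case open_y: (nth cell0 cs y) => [//|mk0] /=.
have old_color c' : c' < k -> nth false mk0 c' = false ->
    exists2 z, z < size cs & nth cell0 cs' z = Colored c' /\ adjacent rows z y.
  move=> lt_c' miss; have [z lt_z [col_z adj_zy]] := sound _ _ _ lt_y open_y lt_c' miss.
  exists z; rewrite // nth_cs' //.
  by case: eqP => [[eq_xz]|_]; [move: col_z; rewrite -eq_xz open_x | rewrite col_z].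
case: ifP => adj_xy [<-] lt_c; last exact: old_color.
rewrite nth_clear_bit; have [_|miss] := boolP (nth false mk0 c); last first.
  by move=> _; apply: old_color; rewrite // (negbTE miss).
by move=> /= /negbFE/eqP ->; exists x; rewrite // nth_cs' // eqxx.
Qed.

Lemma search_complete fuel cs used f :
  masks_sound cs -> colors_below cs used -> used <= k -> extends_to cs f ->
  proper_coloring (size cs) f -> search k rows fuel cs used.
Proof.
elim: fuel cs used f => [//|fuel IH] cs used f sound below le_used ext f_col /=.
case pick: (pick_open cs 0 None) => [[[x msk] c]|//].
have [lt_x open_x] := pick_open0 pick.
have [g [ext_g g_col] le_gx] := relabel_colors below ext f_col lt_x.
have [g_lt g_prop] := g_col.
have avail_gx : nth false msk (g x).
  apply/negPn/negP => /negbTE miss.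
  have [z lt_z [col_z adj_zx]] := sound _ _ _ lt_x open_x (g_lt _ lt_x) miss.
  by move: (g_prop _ _ lt_z lt_x adj_zx); rewrite (ext_g _ _ col_z) eqxx.
apply/hasP; exists (g x); first by rewrite mem_iota /= g_lt.
rewrite avail_gx le_gx /=.
have [sound' below' ext'] := assign_invariants sound below ext_g lt_x open_x.
apply: IH sound' below' _ ext' _; first by rewrite geq_max le_used g_lt.
by rewrite size_assign.
Qed.

Lemma proper_coloring_search E f : proper_coloring E f ->
  search k rows E (nseq E (Open (nseq k true))) 0.
Proof.
move=> f_col; apply: (@search_complete E _ 0 f); rewrite ?size_nseq //.
- move=> y msk c; rewrite size_nseq => lt_y; rewrite nth_nseq lt_y => -[<-] lt_c.
  by rewrite nth_nseq lt_c.
- by move=> z c; rewrite nth_nseq; case: ifP.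
- by move=> z c; rewrite nth_nseq; case: ifP.
Qed.

End SearchCompleteness.

Definition crossb (e e' : nat * nat) : bool :=
  ((e.1 < e'.1) && (e'.1 < e.2) && (e.2 < e'.2)) ||
  ((e'.1 < e.1) && (e.1 < e'.2) && (e'.2 < e.2)).

Definition word_edges N (s : seq bool) : seq (nat * nat) :=
  [seq pq <- [seq (p, q) | p <- iota 0 N, q <- iota 0 N] |
     (pq.1 < pq.2) && (nth false s pq.1 != nth false s pq.2)].

(* Edges sorted by decreasing number of edges they cross, which makes the search
   fast; soundness only uses that every listed pair is an edge. *)
Definition sorted_edges N (s : seq bool) : seq (nat * nat) :=
  let es := word_edges N s in
  let na := count id s in
  let nb := N - na in
  let des := [seq (let ins := take (e.2 - e.1.+1) (drop e.1.+1 s) in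
                   let ai := count id ins in let bi := size ins - ai in
                   ai * (nb - bi).-1 + bi * (na - ai).-1, e) | e <- es] in
  map snd (sort (fun d d' => d'.1 <= d.1) des).

Definition uncolorable N k (s : seq bool) : bool :=
  let es := sorted_edges N s in
  let rows := [seq [seq crossb e e' | e' <- es] | e <- es] in
  ~~ search k rows (size es) (nseq (size es) (Open (nseq k true))) 0.

Lemma mem_sorted_edges N s e : e \in sorted_edges N s -> e \in word_edges N s.
Proof.
rewrite /sorted_edges; set des := [seq _ | e0 <- word_edges N s].
have /(perm_map snd)/perm_mem -> : perm_eq (sort (fun d d' => d'.1 <= d.1) des) des.
  by rewrite perm_sort.
by rewrite /des -map_comp map_id.
Qed.

Lemma mem_word_edges N s e : e \in word_edges N s ->
  [/\ e.1 < e.2, e.2 < N & nth false s e.1 != nth false s e.2].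
Proof.
rewrite mem_filter => /andP[/andP[lt_e w_e]] /allpairsP[[p q] [/= _ q_N e_pq]].
by split=> //; move: q_N; rewrite e_pq mem_iota add0n => /andP[].
Qed.

Lemma uncolorable_sound N k s col :
  uncolorable N k s -> ~ word_embedding N k (nth false s) col.
Proof.
rewrite /uncolorable => /negP no_search emb; apply: no_search.
set es := sorted_edges N s; pose e i := nth (0, 0) es i.
have edge_e i : i < size es ->
    [/\ (e i).1 < (e i).2, (e i).2 < N & nth false s (e i).1 != nth false s (e i).2].
  by move=> lt_i; apply/mem_word_edges/mem_sorted_edges/mem_nth.
have [page_lt _ no_cross] := emb.
apply: (@proper_coloring_search _ _ _ (fun i => col (e i).1 (e i).2)); split.
  by move=> i /edge_e[? ? ?]; apply: page_lt => //; lia.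
move=> i j lt_i lt_j; have [? ? ?] := edge_e i lt_i; have [? ? ?] := edge_e j lt_j.
rewrite /adjacent (nth_map (0, 0)) // (nth_map (0, 0)) // /crossb.
by case/orP=> /andP[/andP[? ?] ?]; [|rewrite eq_sym]; apply: no_cross.
Qed.

(* As in [search], [if] avoids computing [uncolorable] on discarded words. *)
Definition no_embeddable_word m n k : bool :=
  all (fun s => if dihedral_min s then uncolorable (m + n) k s else true) (words m n).

Lemma no_embeddable_wordP m n k q : no_embeddable_word m n k -> q <= k ->
  forall s, ~ embeddable_word (m + n) m q s.
Proof.
move=> /allP check le_qk s [size_s count_s [col emb]].
have emb_k : embeddable_word (m + n) m k s.
  by split=> //; exists col; apply: word_embedding_widen emb.
have [s' [size_s' count_s' [col' emb']] min_s'] := exists_dihedral_min emb_k.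
have := check _ (mem_words size_s' count_s'); rewrite min_s' => uncol.
exact: uncolorable_sound uncol emb'.
Qed.

Lemma Kbip_embedding_pages m n : has_k_page_embedding (@Kbip_rel m.+1 n) m.+1.
Proof.
pose pos (v : 'I_m.+1 + 'I_n) := match v with inl i => val i | inr j => m.+1 + j end.
pose page (u v : 'I_m.+1 + 'I_n) : 'I_m.+1 :=
  match u, v with inl i, _ | _, inl i => i | _, _ => ord0 end.
exists pos, page; split; [|split].
- move=> [i|j] [i'|j'] /= eq_pos.
  + by congr inl; apply: val_inj.
  + by have := ltn_ord i; lia.
  + by have := ltn_ord i'; lia.
  + by congr inr; apply: val_inj => /=; lia.
- by move=> [i|j] [i'|j'].
- move=> [i|j] [i'|j'] [x|x] [y|y] //= _ _ eq_page; rewrite /pos;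
    try (move/(congr1 val): eq_page => /= eq_page); lia.
Qed.

Lemma no_embeddable_word_small :
  all (fun k => no_embeddable_word k.+1 ((k.+1 ^ 2) %/ 4).+1 k) [:: 2; 3; 4; 5; 6].
Proof. vm_cast_no_check (erefl true). Qed.

Theorem theorem3 (k : nat) : 2 <= k <= 6 ->
  is_pagenumber (@Kbip_rel k.+1 ((k.+1 ^ 2) %/ 4).+1) k.+1.
Proof.
move=> k_range; split; first exact: Kbip_embedding_pages.
move=> q [pos [page emb]]; rewrite leqNgt; apply/negP => lt_qk.
have [s emb_s] := Kbip_embeddable_word (ltn0Sn k) emb.
have check_k : no_embeddable_word k.+1 ((k.+1 ^ 2) %/ 4).+1 k.
  by apply: (allP no_embeddable_word_small); rewrite !inE; lia.
exact: no_embeddable_wordP check_k lt_qk s emb_s.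
Qed.
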